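(* Let $A,B,C$ be logically independent events and let $0\le\alpha_1\le\beta_1\le 1$, $0\le\alpha_2\le\beta_2\le 1$. Consider the family of conditional events $\{C|A,\ B|A,\ C|AB\}$. The set of values $z$ for which there exist $x\in[\alpha_1,\beta_1]$ and $y\in[\alpha_2,\beta_2]$ such that the assessment $P(C|A)=x$, $P(B|A)=y$, $P(C|AB)=z$ is coherent is exactly the interval $[\alpha_3,\beta_3]$, where \[ \alpha_3=\begin{cases}\dfrac{\alpha_1+\alpha_2-1}{\alpha_2}, & \alpha_1+\alpha_2>1,\\[1ex] 0, & \alpha_1+\alpha_2\le 1,\end{cases} \qquad \beta_3=\begin{cases}\dfrac{\beta_1}{\alpha_2}, & \beta_1<\alpha_2,\\[1ex] 1, & \beta_1\ge \alpha_2.\end{cases} \] (Cautious Monotonicity: the bounds $P(C|A)\in[\alpha_1,\beta_1]$, $P(B|A)\in[\alpha_2,\beta_2]$ propagate exactly to $P(C|AB)\in[\alpha_3,\beta_3]$.)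
   Context: Events are elements of a Boolean algebra; $AB$ denotes conjunction, $A\vee B$ disjunction, $A^c$ negation. $A,B,C$ are logically independent if all eight conjunctions $A^{*}B^{*}C^{*}$ (each $X^{*}\in\{X,X^c\}$) are possible (nonempty). A conditional event $E|H$ requires $H\neq\emptyset$; conditional probabilities are treated as primitive (no requirement that $P(H)>0$). Coherence (de Finetti): an assessment $(p_1,\dots,p_n)$ on conditional events $E_1|H_1,\dots,E_n|H_n$ is coherent if for every nonempty $J\subseteq\{1,\dots,n\}$ and every real numbers $s_j$ ($j\in J$), the random gain $G=\sum_{j\in J}s_j\,I_{H_j}(I_{E_j}-p_j)$ (with $I$ denoting indicator functions) satisfies $\max G\ge 0$, where the maximum is taken over the possible worlds (atoms) contained in $\bigvee_{j\in J}H_j$. *)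

From Stdlib Require Import Reals List.
Import ListNotations.
Open Scope R_scope.

(* Events are modelled as subsets (boolean predicates) of a sample space
   Omega of possible worlds; conjunction is pointwise &&.  Every Boolean
   algebra embeds into such a powerset algebra (Stone), so this is general. *)
Definition event (Omega : Type) := Omega -> bool.

Definition ev_and {Omega : Type} (A B : event Omega) : event Omega :=
  fun w => andb (A w) (B w).

Definition logically_independent {Omega : Type} (A B C : event Omega) : Prop :=
  forall bA bB bC : bool, exists w : Omega, A w = bA /\ B w = bB /\ C w = bC.

Definition ind (b : bool) : R := if b then 1 else 0.

(* A conditional event E|H is a pair (E, H). *)
Definition cevent (Omega : Type) := (event Omega * event Omega)%type.

Definition gain {Omega : Type} (F : list (cevent Omega)) (p : list R)
    (J : list nat) (s : nat -> R) (w : Omega) : R :=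
  fold_right (fun j acc =>
     s j * ind (snd (nth j F (fun _ => false, fun _ => false)) w)
         * (ind (fst (nth j F (fun _ => false, fun _ => false)) w) - nth j p 0)
     + acc) 0 J.

(* Since G takes finitely many
   values, "max G >= 0 over worlds in the disjunction of the H_j" means
   that some world in that disjunction has G >= 0. *)
Definition coherent {Omega : Type} (F : list (cevent Omega)) (p : list R) : Prop :=
  length p = length F /\
  (forall j, (j < length F)%nat ->
     exists w, snd (nth j F (fun _ => false, fun _ => false)) w = true) /\
  forall (J : list nat), J <> [] -> NoDup J ->
    (forall j, In j J -> (j < length F)%nat) ->
    forall s : nat -> R,
      exists w : Omega,
        (exists j, In j J /\ snd (nth j F (fun _ => false, fun _ => false)) w = true) /\
        0 <= gain F p J s w.

Definition alpha3 (a1 a2 : R) : R :=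
  if Rlt_dec 1 (a1 + a2) then (a1 + a2 - 1) / a2 else 0.

Definition beta3 (b1 a2 : R) : R :=
  if Rlt_dec b1 a2 then b1 / a2 else 1.

(* A family of conditional events is coherent as soon as, for every subfamily J, some probability
   on the possible worlds of the disjunction of the conditioning events makes every bet of J fair:
   the expected gain then vanishes, so the gain cannot be negative everywhere.  For
   {C|A, B|A, C|AB} the four constituents ABC, ABC^c, AB^cC, AB^cC^c with masses
   yz, y(1-z), x-yz, 1-x-y+yz provide such a probability (and z, 1-z on ABC, ABC^c when J only
   bets on C|AB), while suitable bets show that these masses must be nonnegative.  Hence
   (x, y, z) is coherent iff y >= 0, 0 <= z <= 1 and yz <= x <= yz + 1 - y, and projecting this
   region with x in [a1, b1], y in [a2, b2] gives a2 z >= a1 + a2 - 1 and a2 z <= b1, i.e.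
   z in [alpha3, beta3]. *)
From Pilot Require Import Defs.
From Stdlib Require Import Reals List Lra Lia Psatz.
Import ListNotations.
Open Scope R_scope.

Section WeightedSum.
Context {Omega : Type}.
Implicit Types (ws : list (R * Omega)) (f g : Omega -> R).

Definition weighted_sum ws f : R :=
  fold_right (fun q acc => fst q * f (snd q) + acc) 0 ws.

Lemma weighted_sum0 ws : weighted_sum ws (fun _ => 0) = 0.
Proof. induction ws as [|q ws IH]; simpl; [|rewrite IH]; ring. Qed.

Lemma weighted_sumD ws f g :
  weighted_sum ws (fun w => f w + g w) = weighted_sum ws f + weighted_sum ws g.
Proof. induction ws as [|q ws IH]; simpl; [|rewrite IH]; ring. Qed.

Lemma weighted_sum_le0 ws g :
  Forall (fun q => 0 <= fst q /\ g (snd q) <= 0) ws -> weighted_sum ws g <= 0.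
Proof. induction 1 as [|q ws [Hq Hg] _ IH]; simpl; nra. Qed.

Lemma weighted_sum_lt0 ws g :
  Forall (fun q => 0 <= fst q /\ g (snd q) < 0) ws ->
  0 < weighted_sum ws (fun _ => 1) -> weighted_sum ws g < 0.
Proof.
  induction 1 as [|q ws [Hq Hg] Hws IH]; simpl; [lra|]. intros Htotal.
  destruct (Rle_lt_or_eq_dec _ _ Hq) as [Hq_pos|Hq0].
  - assert (weighted_sum ws g <= 0).
    { apply weighted_sum_le0. eapply Forall_impl; [|exact Hws]. simpl; intros q' [? ?]; lra. }
    nra.
  - rewrite <- Hq0 in Htotal |- *. assert (weighted_sum ws g < 0) by (apply IH; lra). lra.
Qed.

Lemma weighted_sum_ge0_witness ws g :
  Forall (fun q => 0 <= fst q) ws -> 0 < weighted_sum ws (fun _ => 1) ->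
  0 <= weighted_sum ws g -> exists q, In q ws /\ 0 <= g (snd q).
Proof.
  intros Hws Htotal Hg. apply Exists_exists.
  destruct (Exists_dec (fun q => 0 <= g (snd q)) ws (fun q => Rle_dec 0 (g (snd q))))
    as [|Hnone]; [assumption|].
  apply Forall_Exists_neg in Hnone.
  assert (weighted_sum ws g < 0); [|lra].
  apply weighted_sum_lt0; [|assumption].
  eapply Forall_impl; [|exact (Forall_and Hws Hnone)]. simpl; intros q [? ?]; lra.
Qed.
End WeightedSum.

Section Coherence.
Context {Omega : Type}.
Implicit Types (F : list (cevent Omega)) (p : list R) (J : list nat) (s : nat -> R).

Definition no_cevent : cevent Omega := (fun _ => false, fun _ => false).

Definition gain_term F p s j (w : Omega) : R :=
  s j * Defs.ind (snd (nth j F no_cevent) w)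
      * (Defs.ind (fst (nth j F no_cevent) w) - nth j p 0).

Lemma weighted_sum_gain F p J s ws :
  (forall j, In j J -> weighted_sum ws (gain_term F p s j) = 0) ->
  weighted_sum ws (gain F p J s) = 0.
Proof.
  induction J as [|j J IH]; intros Hfair.
  - apply weighted_sum0.
  - change (gain F p (j :: J) s) with (fun w => gain_term F p s j w + gain F p J s w).
    rewrite weighted_sumD, Hfair, IH; [ring | | left; reflexivity].
    intros j' Hj'; apply Hfair; right; exact Hj'.
Qed.

Lemma coherent_of_fair_weights F p :
  length p = length F ->
  (forall j, (j < length F)%nat -> exists w, snd (nth j F no_cevent) w = true) ->
  (forall J, J <> [] -> (forall j, In j J -> (j < length F)%nat) ->
     exists ws : list (R * Omega),
       Forall (fun q => 0 <= fst q /\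
                 exists j, In j J /\ snd (nth j F no_cevent) (snd q) = true) ws /\
       0 < weighted_sum ws (fun _ => 1) /\
       forall s j, In j J -> weighted_sum ws (gain_term F p s j) = 0) ->
  coherent F p.
Proof.
  intros Hlen Hposs Hfair. split; [exact Hlen|]. split; [exact Hposs|].
  intros J HJ _ HJlt s.
  destruct (Hfair J HJ HJlt) as (ws & Hws & Htotal & Hbets).
  apply Forall_and_inv in Hws as [Hweights Hworlds].
  destruct (weighted_sum_ge0_witness ws (gain F p J s) Hweights Htotal)
    as (q & Hq & Hgain).
  { rewrite (weighted_sum_gain F p J s ws (Hbets s)). lra. }
  exists (snd q). split; [|exact Hgain].
  exact (proj1 (Forall_forall _ ws) Hworlds q Hq).
Qed.
End Coherence.

Section CautiousMonotonicity.
Variables (Omega : Type) (A B C : event Omega).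

Lemma cm_coherent_sufficient x y z :
  logically_independent A B C ->
  0 <= y -> 0 <= z <= 1 -> y * z <= x <= y * z + 1 - y ->
  coherent [(C, A); (B, A); (C, ev_and A B)] [x; y; z].
Proof.
  intros LI Hy Hz Hx.
  destruct (LI true true true) as (w1 & A1 & B1 & C1).
  destruct (LI true true false) as (w2 & A2 & B2 & C2).
  destruct (LI true false true) as (w3 & A3 & B3 & C3).
  destruct (LI true false false) as (w4 & A4 & B4 & C4).
  assert (AB1 : ev_and A B w1 = true) by (unfold ev_and; rewrite A1, B1; reflexivity).
  assert (AB2 : ev_and A B w2 = true) by (unfold ev_and; rewrite A2, B2; reflexivity).
  set (F := [(C, A); (B, A); (C, ev_and A B)]).
  set (ws_A := [(y * z, w1); (y * (1 - z), w2); (x - y * z, w3); (1 - x - y + y * z, w4)]).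
  set (ws_AB := [(z, w1); (1 - z, w2)]).
  assert (Hfair_A : forall s j, weighted_sum ws_A (gain_term F [x; y; z] s j) = 0).
  { intros s j; destruct j as [|[|[|[|j]]]];
      unfold ws_A, F, gain_term, weighted_sum, ev_and; simpl;
      rewrite ?A1, ?B1, ?C1, ?A2, ?B2, ?C2, ?A3, ?B3, ?C3, ?A4, ?B4, ?C4; simpl; ring. }
  assert (Hfair_AB : forall s, weighted_sum ws_AB (gain_term F [x; y; z] s 2) = 0).
  { intros s; unfold ws_AB, F, gain_term, weighted_sum; simpl.
    rewrite AB1, AB2, C1, C2; simpl; ring. }
  apply coherent_of_fair_weights; [reflexivity| |].
  { intros j Hj; exists w1. destruct j as [|[|[|j]]]; simpl in *; auto; lia. }
  intros J HJ HJlt.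
  destruct (Exists_dec (fun j => (j < 2)%nat) J (fun j => Compare_dec.lt_dec j 2))
    as [HbetA|HbetAB].
  - apply Exists_exists in HbetA as (jA & HjA & HjA2).
    assert (HA : forall w, A w = true -> snd (nth jA F no_cevent) w = true).
    { intros w Hw; destruct jA as [|[|jA]]; [exact Hw|exact Hw|lia]. }
    exists ws_A. split; [|split].
    + repeat apply Forall_cons; try apply Forall_nil; simpl;
        (split; [nra | exists jA; split; [exact HjA|apply HA; assumption]]).
    + unfold weighted_sum; simpl; lra.
    + intros s j _; apply Hfair_A.
  - apply Forall_Exists_neg in HbetAB.
    assert (HJ2 : forall j, In j J -> j = 2%nat).
    { intros j Hj. pose proof (HJlt j Hj). pose proof (proj1 (Forall_forall _ J) HbetAB j Hj).
      simpl in *; lia. }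
    destruct J as [|j0 J]; [congruence|].
    assert (Hj0 : In j0 (j0 :: J)) by (left; reflexivity).
    exists ws_AB. split; [|split].
    + repeat apply Forall_cons; try apply Forall_nil; simpl;
        (split; [lra | exists j0; split; [exact Hj0|rewrite (HJ2 j0 Hj0); assumption]]).
    + unfold weighted_sum; simpl; lra.
    + intros s j Hj; rewrite (HJ2 j Hj); apply Hfair_AB.
Qed.

Lemma cm_coherent_necessary x y z :
  coherent [(C, A); (B, A); (C, ev_and A B)] [x; y; z] ->
  0 <= y /\ 0 <= z <= 1 /\ y * z <= x <= y * z + 1 - y.
Proof.
  intros (_ & _ & Hcoh).
  assert (Hbet_AB : forall c,
             exists w, A w = true /\ B w = true /\ 0 <= c * (Defs.ind (C w) - z)).
  { intros c.
    destruct (Hcoh [2%nat] ltac:(congruence) ltac:(repeat constructor; simpl; tauto)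
                ltac:(intros j [<-|[]]; simpl; lia) (fun _ => c))
      as (w & (j & [<-|[]] & Hw) & Hgain).
    simpl in Hw; unfold ev_and in Hw. apply andb_prop in Hw as [Aw Bw].
    exists w. unfold gain, ev_and in Hgain; simpl in Hgain. rewrite Aw, Bw in Hgain.
    simpl in Hgain. repeat split; auto; lra. }
  assert (Hbet_A : forall a b c, exists w, A w = true /\
     0 <= a * (Defs.ind (C w) - x) + b * (Defs.ind (B w) - y)
          + c * Defs.ind (B w) * (Defs.ind (C w) - z)).
  { intros a b c.
    destruct (Hcoh [0%nat; 1%nat; 2%nat] ltac:(congruence)
                ltac:(repeat constructor; simpl; intuition congruence)
                ltac:(intros j [<-|[<-|[<-|[]]]]; simpl; lia)
                (fun j => match j with 0%nat => a | 1%nat => b | _ => c end))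
      as (w & (j & Hj & Hw) & Hgain).
    assert (Aw : A w = true).
    { destruct Hj as [<-|[<-|[<-|[]]]]; simpl in Hw; unfold ev_and in Hw; auto.
      destruct (A w); auto. }
    exists w. split; [exact Aw|].
    unfold gain, ev_and in Hgain; simpl in Hgain. rewrite Aw in Hgain. simpl in Hgain. lra. }
  destruct (Hbet_A 0 (-1) 0) as (w0 & _ & Hy).
  destruct (Hbet_AB (-1)) as (w1 & _ & _ & Hz0).
  destruct (Hbet_AB 1) as (w2 & _ & _ & Hz1).
  destruct (Hbet_A (-1) z 1) as (w3 & _ & Hlo).
  destruct (Hbet_A 1 (1 - z) (-1)) as (w4 & _ & Hup).
  destruct (B w0), (C w1), (C w2), (B w3), (C w3), (B w4), (C w4); simpl in *;
    repeat split; nra.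
Qed.

Lemma cm_coherent_iff x y z :
  logically_independent A B C ->
  coherent [(C, A); (B, A); (C, ev_and A B)] [x; y; z] <->
  0 <= y /\ 0 <= z <= 1 /\ y * z <= x <= y * z + 1 - y.
Proof.
  intros LI; split; [apply cm_coherent_necessary|].
  intros (Hy & Hz & Hx); exact (cm_coherent_sufficient x y z LI Hy Hz Hx).
Qed.
End CautiousMonotonicity.

Lemma alpha3_le_iff a1 a2 z :
  a1 <= 1 -> 0 <= a2 -> alpha3 a1 a2 <= z <-> 0 <= z /\ a1 + a2 - 1 <= a2 * z.
Proof.
  intros Ha1 Ha2. unfold alpha3. destruct (Rlt_dec 1 (a1 + a2)); [|nra].
  set (q := (a1 + a2 - 1) / a2).
  assert (Hq : a2 * q = a1 + a2 - 1) by (unfold q; field; lra).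
  nra.
Qed.

Lemma le_beta3_iff b1 a2 z :
  0 <= b1 -> 0 <= a2 -> z <= beta3 b1 a2 <-> z <= 1 /\ a2 * z <= b1.
Proof.
  intros Hb1 Ha2. unfold beta3. destruct (Rlt_dec b1 a2); [|nra].
  set (q := b1 / a2).
  assert (Hq : a2 * q = b1) by (unfold q; field; lra).
  nra.
Qed.

Theorem mainTheorem1 :
  forall (Omega : Type) (A B C : event Omega),
    logically_independent A B C ->
    forall a1 b1 a2 b2 : R,
      0 <= a1 -> a1 <= b1 -> b1 <= 1 ->
      0 <= a2 -> a2 <= b2 -> b2 <= 1 ->
      forall z : R,
        (exists x y : R, a1 <= x <= b1 /\ a2 <= y <= b2 /\
           coherent [(C, A); (B, A); (C, ev_and A B)] [x; y; z])
        <-> alpha3 a1 a2 <= z <= beta3 b1 a2.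
Proof.
  intros Omega A B C LI a1 b1 a2 b2 Ha1 Hab1 Hb1 Ha2 Hab2 Hb2 z.
  rewrite alpha3_le_iff, le_beta3_iff by lra.
  split.
  - intros (x & y & Hx & Hy & Hcoh).
    apply (cm_coherent_iff _ _ _ _ x y z LI) in Hcoh. nra.
  - intros [[Hz0 Hlo] [Hz1 Hup]].
    exists (Rmax a1 (a2 * z)), a2.
    rewrite cm_coherent_iff by exact LI.
    unfold Rmax; destruct (Rle_dec a1 (a2 * z)); nra.
Qed.
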